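(* Assume (H2). Then for any $q,q'\in\mathbb R^d$ with $q\ne q'$ and any $A>0$ there is $\kappa>0$ such that \[\lim_{\delta\to0}\limsup_{n\to\infty}\sup_{z\in E:|z-nq|<\delta n}\frac1n\log\int_0^{\kappa n}\mathbb P_z\bigl(Z(t)\in nB(q',\delta)\bigr)\,dt\ \le\ -A.\]
   Context: Let $E\subset\mathbb R^d$ be unbounded and $(Z(t))_{t\ge0}$ a continuous-time strong Markov process on $E$ with right-continuous paths having left limits; $\mathbb P_z,\mathbb E_z$ denote probability and expectation given $Z(0)=z$. For $B\subset\mathbb R^d$ and $n>0$, $nB=\{nx:x\in B\}$; $B(x,r)$ is the open ball of center $x$ and radius $r$. (H2): the function $\hat\varphi(a)=\sup_{z\in E}\sup_{t\in[0,1]}\mathbb E_z(e^{a\cdot(Z(t)-z)})$ is finite for every $a\in\mathbb R^d$. *)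

From HB Require Import structures.
From mathcomp Require Import all_boot all_order all_algebra.
From mathcomp Require Import all_classical all_reals all_analysis.
Set Implicit Arguments. Unset Strict Implicit. Unset Printing Implicit Defensive.
Import Order.TTheory GRing.Theory Num.Theory.
Import numFieldNormedType.Exports.
Local Open Scope classical_set_scope.
Local Open Scope ring_scope.

Section Defs.
Variables (R : realType) (d : nat).
Notation V := 'rV[R]_d.

Definition dotp (a x : V) : R := \sum_(i < d) a ord0 i * x ord0 i.
Definition enorm (x : V) : R := Num.sqrt (\sum_(i < d) x ord0 i ^+ 2).

Definition eball (x : V) (r : R) : set V := [set y | enorm (y - x) < r].

Definition scaleset (n : R) (B : set V) : set V := [set n *: x | x in B].

Definition rV_borel (B : set V) : Prop := <<s [set O : set V | open O] >> B.

Definition unbounded (E : set V) : Prop :=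
  ~ (exists M : R, forall z, E z -> enorm z <= M).

(* A right-continuous process with left limits, strong Markov w.r.t. a
   filtration F, with state space E, laws P z (z in E). *)
Section Process.
Variables (dO : measure_display) (Om : measurableType dO)
  (E : set V) (P : V -> probability Om R) (Z : R -> Om -> V)
  (F : R -> set (set Om)).

Definition filtration_adapted : Prop :=
  [/\ (forall t, (0 <= t)%R -> sigma_algebra setT (F t) /\ F t `<=` measurable),
      (forall s t, (0 <= s)%R -> (s <= t)%R -> F s `<=` F t) &
      (forall t B, (0 <= t)%R -> rV_borel B -> F t (Z t @^-1` B))].

Definition cadlag_paths : Prop :=
  (forall w t, (0 <= t)%R -> (Z ^~ w) x @[x --> at_right t] --> Z t w) /\
  (forall w t, (0 < t)%R -> cvg ((Z ^~ w) x @[x --> at_left t])).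

Definition stopping_time (tau : Om -> R) : Prop :=
  (forall w, (0 <= tau w)%R) /\
  (forall t, (0 <= t)%R -> F t [set w | (tau w <= t)%R]).

Definition F_tau (tau : Om -> R) (A : set Om) : Prop :=
  measurable A /\ (forall t, (0 <= t)%R -> F t (A `&` [set w | (tau w <= t)%R])).

Definition strong_Markov : Prop :=
  forall z, E z -> forall tau, stopping_time tau -> forall A, F_tau tau A ->
  forall s B, (0 <= s)%R -> rV_borel B ->
    (P z (A `&` [set w | B (Z (tau w + s)%R w)]) =
    \int[P z]_(w in A) P (Z (tau w) w) [set w' | B (Z s w')])%E.

Definition strong_Markov_process : Prop :=
  [/\ filtration_adapted, cadlag_paths,
    (forall t w, (0 <= t)%R -> E (Z t w)) /\
    (forall z, E z -> P z [set w | Z 0%R w = z] = 1%E),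
    (* measurability of z |-> P z A on E (trace sigma-algebra) *)
    (forall A : set Om, measurable A -> forall r : R,
       exists B, rV_borel B /\ E `&` [set z | (P z A <= r%:E)%E] = E `&` B) &
    strong_Markov].

End Process.

Local Open Scope ereal_scope.

Definition phi_hat (dO : measure_display) (Om : measurableType dO)
  (E : set V) (P : V -> probability Om R) (Z : R -> Om -> V) (a : V) : \bar R :=
  ereal_sup [set e | exists z t, [/\ E z, (0 <= t <= 1)%R &
     e = \int[P z]_w (expR (dotp a (Z t w - z)))%:E]].

Definition H2 (dO : measure_display) (Om : measurableType dO)
  (E : set V) (P : V -> probability Om R) (Z : R -> Om -> V) : Prop :=
  forall a, phi_hat E P Z a < +oo.

Definition occupation_rate (dO : measure_display) (Om : measurableType dO)
  (E : set V) (P : V -> probability Om R) (Z : R -> Om -> V)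
  (q q' : V) (kappa delta : R) (n : nat) : \bar R :=
  ereal_sup [set ((n%:R)^-1)%:E *
      lne (\int[lebesgue_measure]_(t in `[0%R, (kappa * n%:R)%R]%classic)
             P z [set w | scaleset n%:R (eball q' delta) (Z t w)])
    | z in [set z | E z /\ (enorm (z - n%:R *: q) < delta * n%:R)%R]].

End Defs.

(* Pick a with a . (q' - q) = A + 4; by (H2) the moments E_z exp (a . (Z t - z))
   are bounded by some Phi for t in [0, 1]. The Markov property at deterministic
   times gives E_z exp (a . (Z (t + s) - z)) <= e Phi E_z exp (a . (Z t - z)), so
   these moments grow at most like M ^ (t + 1) with M = max (1, e Phi). If
   |z - n q| < r n and Z t lies in n B(q', r), the exponent a . (Z t - z) is at
   least n (A + 4 - 2 r |a|_1), and Chernoff's bound with r = 1 / (2 |a|_1 + 1)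
   and kappa = 1 / (ln M + 1) makes the rate at most -A. The limsup is
   nondecreasing in r, so its limit as r -> 0+ exists and lies below that value. *)

From HB Require Import structures.
From mathcomp Require Import all_boot all_order all_algebra.
From mathcomp Require Import all_classical all_reals all_analysis.
From mathcomp Require Import measurable_realfun ring lra.
Set Implicit Arguments. Unset Strict Implicit. Unset Printing Implicit Defensive.
Import Order.TTheory GRing.Theory Num.Theory.
Import numFieldNormedType.Exports.
Local Open Scope classical_set_scope.
Local Open Scope ring_scope.

Section nonneg_integral.
Context d (T : measurableType d) (R : realType).
Local Open Scope ereal_scope.

(* No measurability is needed: the integral of a nonnegative function is the
   supremum of the integrals of the simple functions below it. *)
Lemma ge0_le_integral_nomeas (mu : {measure set T -> \bar R}) (D : set T)
    (f g : T -> \bar R) :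
  (forall x, D x -> 0 <= f x) -> (forall x, D x -> f x <= g x) ->
  \int[mu]_(x in D) f x <= \int[mu]_(x in D) g x.
Proof.
move=> f0 fg.
have g0 x : D x -> 0 <= g x by move=> Dx; exact: le_trans (f0 _ Dx) (fg _ Dx).
rewrite ge0_integralE // [leRHS]ge0_integralE //=.
apply: le_ereal_sup => _ [h hf <-]; exists h => //= x.
apply: le_trans (hf x) _; rewrite /patch; case: ifP => // /[!inE] Dx; exact: fg.
Qed.

Lemma nneseries_single (u : nat -> \bar R) n0 :
  (forall k, k != n0 -> u k = 0) -> 0 <= u n0 -> \sum_(k <oo) u k = u n0.
Proof.
move=> u0 un0.
have u_ge0 k : true -> 0 <= u k by have [->|/u0->] := eqVneq k n0.
rewrite (nneseriesD1 (n:=n0) u_ge0) // eseries0 ?adde0 // => i _ /=; exact: u0.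
Qed.

End nonneg_integral.

Section floor_discretization.
Context d (T : measurableType d) (R : realType).
Local Open Scope ereal_scope.
Variables (mu : {measure set T -> \bar R}) (X : T -> R).
Hypothesis measurable_floor_level : forall k : int, measurable [set w | Num.floor (X w) = k].

Definition floor_level (j : nat) : int := odflt 0%Z (pickle_inv j).

(* Indices outside the range of [pickle] get weight 0, so that every level set
   is counted exactly once. *)
Definition floor_weight (j : nat) : R :=
  if pickle_inv j is Some k then expR (k%:~R + 1) else 0.

Definition floor_set j := [set w | Num.floor (X w) = floor_level j].

Definition floor_term j w := (floor_weight j * \1_(floor_set j) w)%:E.

Lemma floor_weight_ge0 j : (0 <= floor_weight j)%R.
Proof. by rewrite /floor_weight; case: pickle_inv => // k; exact: expR_ge0. Qed.

Lemma floor_term_ge0 j w : 0 <= floor_term j w.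
Proof. by rewrite lee_fin mulr_ge0 ?floor_weight_ge0. Qed.

Lemma measurable_floor_term j : measurable_fun setT (floor_term j).
Proof.
rewrite /floor_term; apply/measurable_EFinP/measurable_funM; first exact: measurable_cst.
exact/measurable_indic/measurable_floor_level.
Qed.

Lemma nneseries_floor_term w :
  \sum_(j <oo) floor_term j w = (expR ((Num.floor (X w))%:~R + 1))%:E.
Proof.
rewrite (@nneseries_single _ _ (pickle (Num.floor (X w)))); last exact: floor_term_ge0.
  by rewrite /floor_term /floor_weight /floor_set /floor_level pickleK_inv indicE mem_set ?mulr1.
move=> j; rewrite /floor_term /floor_weight /floor_set /floor_level.
case hk: (pickle_inv j) => [k|] /=; last by rewrite mul0r.
rewrite indicE; case: (boolP (_ \in _)) => [/set_mem /= fk|_]; last by rewrite mulr0.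
by have := @pickle_invK int j; rewrite hk /= -fk => ->; rewrite eqxx.
Qed.

Lemma integral_floor_term j : \int[mu]_w floor_term j w = (floor_weight j)%:E * mu (floor_set j).
Proof.
rewrite (@integralZl_indic _ _ _ mu setT measurableT (fun _ => floor_set j)) //.
- by rewrite integral_indic ?setIT //; exact: measurable_floor_level.
- by move=> h; have := floor_weight_ge0 j; rewrite leNgt h.
- exact: measurable_floor_level.
Qed.

Lemma integral_expR_le_floor_series :
  \int[mu]_w (expR (X w))%:E <= \sum_(j <oo) (floor_weight j)%:E * mu (floor_set j).
Proof.
apply: (@le_trans _ _ (\int[mu]_w \sum_(j <oo) floor_term j w)).
  apply: ge0_le_integral_nomeas => w _; first by rewrite lee_fin expR_ge0.
  rewrite nneseries_floor_term lee_fin ler_expR; apply/ltW.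
  by rewrite -[1%R]/(1%:~R) -intrD floorD1_gt.
rewrite integral_nneseries //; last by move=> n w _; exact: floor_term_ge0.
  apply: lee_nneseries => j _; first by rewrite integral_ge0 // => w _; exact: floor_term_ge0.
  by rewrite integral_floor_term.
exact: measurable_floor_term.
Qed.

Lemma floor_series_le_integral_expRD1 :
  \sum_(j <oo) (floor_weight j)%:E * mu (floor_set j) <= \int[mu]_w (expR (X w + 1))%:E.
Proof.
rewrite (eq_eseriesr (g := fun j => \int[mu]_w floor_term j w)); last first.
  by move=> j _; rewrite integral_floor_term.
rewrite -integral_nneseries //; last by move=> n w _; exact: floor_term_ge0.
  apply: ge0_le_integral_nomeas => w _.
    by apply: nneseries_ge0 => j _ _; exact: floor_term_ge0.
  by rewrite nneseries_floor_term lee_fin ler_expR lerD2r floor_le.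
exact: measurable_floor_term.
Qed.

End floor_discretization.

Section euclidean.
Context (R : realType) (d : nat).
Notation V := 'rV[R]_d.

Definition l1norm (a : V) : R := \sum_(i < d) `|a ord0 i|.

Lemma l1norm_ge0 (a : V) : 0 <= l1norm a.
Proof. exact: sumr_ge0. Qed.

Lemma dotpB (a u v : V) : dotp a (u - v) = dotp a u - dotp a v.
Proof.
rewrite /dotp -sumrB; apply: eq_bigr => i _.
by rewrite !mxE mulrDr mulrN.
Qed.

Lemma dotpZ (a u : V) k : dotp a (k *: u) = k * dotp a u.
Proof. by rewrite /dotp mulr_sumr; apply: eq_bigr => i _; rewrite mxE mulrCA. Qed.

Lemma dotpC (u v : V) : dotp u v = dotp v u.
Proof. by apply: eq_bigr => i _; rewrite mulrC. Qed.

Lemma dotp_self_gt0 (v : V) : v != 0 -> 0 < dotp v v.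
Proof.
move=> v0; rewrite lt_def sumr_ge0 ?andbT => [|i _]; last by rewrite -expr2 sqr_ge0.
apply: contra v0; rewrite psumr_eq0 => [/allP v0|i _]; last by rewrite -expr2 sqr_ge0.
apply/eqP/rowP => i; rewrite mxE.
by have := v0 i (mem_index_enum i); rewrite /= mulf_eq0 orbb => /eqP.
Qed.

Lemma dotp_eq_exists (p : V) (c : R) : p != 0 -> exists a, dotp a p = c.
Proof.
move=> p0; exists ((c / dotp p p) *: p).
by rewrite dotpC dotpZ divfK // gt_eqF // dotp_self_gt0.
Qed.

Lemma unbounded_nonempty (E : set V) : unbounded E -> E !=set0.
Proof.
move=> unbE; apply: contrapT => noE; apply: unbE; exists 0 => z Ez.
by case: noE; exists z.
Qed.

Lemma normr_coord_le_enorm (v : V) i : `|v ord0 i| <= enorm v.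
Proof.
rewrite /enorm -sqrtr_sqr; apply: ler_wsqrtr.
by rewrite (bigD1 i) //= lerDl; apply: sumr_ge0 => j _; exact: sqr_ge0.
Qed.

Lemma normr_dotp_le (a v : V) : `|dotp a v| <= l1norm a * enorm v.
Proof.
rewrite /dotp /l1norm mulr_suml; apply: le_trans (ler_norm_sum _ _ _) _.
by apply: ler_sum => i _; rewrite normrM ler_wpM2l ?normr_coord_le_enorm.
Qed.

Lemma continuous_dotp (a : V) : continuous (dotp a).
Proof.
rewrite /dotp; apply: continuous_big; first exact: add_continuous.
move=> i _ x.
exact: (cvgM (cvg_cst (a ord0 i)) (@coord_continuous R 1 d ord0 i x)).
Qed.

Lemma continuous_enorm : continuous (@enorm R d).
Proof.
move=> x; apply: continuous_comp; last exact: sqrt_continuous.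
apply: continuous_big; first exact: add_continuous.
move=> i _ y; rewrite /GRing.exp /=.
exact: (cvgM (@coord_continuous R 1 d ord0 i y) (@coord_continuous R 1 d ord0 i y)).
Qed.

Lemma continuous_dotp_sub (a v : V) : continuous (fun x : V => dotp a (x - v)).
Proof.
have -> : (fun x : V => dotp a (x - v)) = (fun x => dotp a x - dotp a v).
  by apply: funext => x; rewrite dotpB.
by move=> x; apply: continuousB; [exact: continuous_dotp | exact: cst_continuous].
Qed.

Lemma continuous_scale_sub (c : R) (p : V) : continuous (fun x : V => enorm (c *: x - p)).
Proof.
move=> x; apply: continuous_comp; last exact: continuous_enorm.
by apply: continuousB; [exact: scaler_continuous | exact: cst_continuous].
Qed.

Lemma rV_borel_open (B : set V) : open B -> rV_borel B.
Proof. exact: sub_sigma_algebra. Qed.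

Lemma rV_borelI (A B : set V) : rV_borel A -> rV_borel B -> rV_borel (A `&` B).
Proof. exact: (@measurableI _ (g_sigma_algebraType [set O : set V | open O])). Qed.

Lemma rV_borel_lt (f : V -> R) c : continuous f -> rV_borel [set x | f x < c].
Proof.
move=> cf; apply: rV_borel_open; apply: (@open_comp _ _ f [set y | y < c]); last exact: open_lt.
by move=> x _; exact: cf.
Qed.

Lemma rV_borel_gt (f : V -> R) c : continuous f -> rV_borel [set x | c < f x].
Proof.
move=> cf; apply: rV_borel_open; apply: (@open_comp _ _ f [set y | c < y]); last exact: open_gt.
by move=> x _; exact: cf.
Qed.

Lemma rV_borel_floor_eq (f : V -> R) (k : int) :
  continuous f -> rV_borel [set x | Num.floor (f x) = k].
Proof.
move=> cf.
have -> : [set x | Num.floor (f x) = k] =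
    ~` [set x | f x < k%:~R] `&` [set x | f x < (k + 1)%:~R].
  apply/seteqP; split => x /=.
    by move=> <-; split; [apply/negP; rewrite -leNgt floor_le | exact: floorD1_gt].
  by move=> [/negP]; rewrite -leNgt => h1 h2; apply: floor_def; rewrite h1 h2.
by apply: rV_borelI; [apply: sigma_algebraC |]; exact: rV_borel_lt.
Qed.

Lemma scaleset_eball (n : R) (q : V) r : n != 0 ->
  scaleset n (eball q r) = [set x | enorm (n^-1 *: x - q) < r].
Proof.
move=> n0; apply/seteqP; split => [_ [y yB <-]|x xB] /=.
  by rewrite scalerA mulVf // scale1r.
by exists (n^-1 *: x) => //; rewrite scalerA divff // scale1r.
Qed.

Lemma rV_borel_scaleset_eball (n : R) (q : V) r : n != 0 ->
  rV_borel (scaleset n (eball q r)).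
Proof.
move=> n0; rewrite scaleset_eball //.
exact: rV_borel_lt (@continuous_scale_sub _ _).
Qed.

Lemma dotp_scaled_ball_ge (a q q' y z : V) (n r : R) : 0 <= n ->
  enorm (y - q') < r -> enorm (z - n *: q) < r * n ->
  n * (dotp a (q' - q) - 2 * l1norm a * r) <= dotp a (n *: y - z).
Proof.
move=> n0 hy hz.
have := normr_dotp_le a (y - q'); have := normr_dotp_le a (z - n *: q).
have := l1norm_ge0 a; set Sa := l1norm a => Sa0 h2 h1.
have Hq' : dotp a q' - dotp a y <= Sa * r.
  apply: le_trans (le_trans h1 (ler_wpM2l Sa0 (ltW hy))).
  by rewrite dotpB -normrN opprB ler_norm.
have Hq : dotp a z - n * dotp a q <= Sa * (r * n).
  apply: le_trans (le_trans h2 (ler_wpM2l Sa0 (ltW hz))).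
  by rewrite dotpB dotpZ ler_norm.
have := ler_wpM2l n0 Hq'.
rewrite !dotpB dotpZ; nra.
Qed.

End euclidean.

Section extended_reals.
Context (R : realType).
Local Open Scope ereal_scope.

Lemma lne_le_ln (x : \bar R) (y : R) : 0 <= x -> x <= y%:E -> (0 < y)%R -> lne x <= (ln y)%:E.
Proof.
by move=> x0 xy y0; rewrite -lne_EFin // lee_lne // in_itv /= ?leey ?andbT // lee_fin ltW.
Qed.

Lemma le_limn_esup (u v : (\bar R)^nat) :
  (forall n, u n <= v n) -> limn_esup u <= limn_esup v.
Proof.
move=> uv; rewrite !limn_esup_lim; apply: lee_lim; try exact: is_cvg_esups.
apply: nearW => n /=; apply: ge_ereal_sup => _ [k kn <-].
by apply: le_trans (uv k) _; apply: ereal_sup_ubound; exists k.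
Qed.

Lemma limn_esup_le (u : (\bar R)^nat) (c : \bar R) N :
  (forall n, (N <= n)%N -> u n <= c) -> limn_esup u <= c.
Proof.
move=> uc; rewrite limn_esup_lim (cvg_lim _ (@cvg_esups_inf _ u)) //.
apply: le_trans (ereal_inf_lbound _) _; first by exists N.
by apply: ge_ereal_sup => _ [k kN <-]; exact: uc.
Qed.

End extended_reals.

(* With k := 1 / (l + 1), each of ln (k n) / n, k l, l / n and
   2 s / (2 s + 1) is at most 1. *)
Lemma rate_le_opp (R : realType) (A l s n : R) : 0 <= l -> 0 <= s -> l < n ->
  n^-1 * (ln ((l + 1)^-1 * n) + (- (n * ((A + 4) - 2 * s * (2 * s + 1)^-1))
    + ((l + 1)^-1 * n + 1) * l)) <= - A.
Proof.
move=> l0 s0 l_lt_n; set k := (l + 1)^-1.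
have n0 : 0 < n by apply: le_lt_trans l_lt_n.
have k0 : 0 < k by rewrite invr_gt0; lra.
have kl : k * l <= 1 by rewrite ler_pdivrMl ?mulr1; lra.
have sd : 2 * s * (2 * s + 1)^-1 <= 1 by rewrite ler_pdivrMr ?mul1r; lra.
have lnkn : ln (k * n) <= n.
  apply/ltW/(lt_le_trans (ln_sublinear _)); first by rewrite mulr_gt0.
  by rewrite ler_piMl ?(ltW n0) // invf_le1; lra.
have := ler_wpM2l (ltW n0) sd; have := ler_wpM2l (ltW n0) kl.
rewrite ler_pdivrMl //; nra.
Qed.

Section strong_Markov_process.
Context (R : realType) (d : nat) (dO : measure_display) (Om : measurableType dO)
  (E : set 'rV[R]_d) (P : 'rV[R]_d -> probability Om R)
  (Z : R -> Om -> 'rV[R]_d) (F : R -> set (set Om)).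
Notation V := 'rV[R]_d.
Hypothesis SM : strong_Markov_process E P Z F.

Lemma measurable_Z_preimage t B : 0 <= t -> rV_borel B -> measurable (Z t @^-1` B).
Proof.
case: SM => -[FZ _ adapted] _ _ _ _ t0 hB.
exact: (proj2 (FZ t t0) _ (adapted t B t0 hB)).
Qed.

Lemma Z_in_E t w : 0 <= t -> E (Z t w).
Proof. by case: SM => _ _ [ZE _] _ _ /ZE. Qed.

Lemma filtration_const_event u (p : Prop) : 0 <= u -> F u [set _ | p].
Proof.
case: SM => -[FZ _ _] _ _ _ _ u0; have [[F0 FC _] _] := FZ u u0.
have [hp|hp] := pselect p.
  have -> : [set _ : Om | p] = setT by apply/seteqP; split.
  by rewrite -(setD0 setT); exact: FC.
by have -> : [set _ : Om | p] = set0 by apply/seteqP; split.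
Qed.

(* A deterministic time is a stopping time. *)
Lemma Markov_const_time z t s (B : set V) : E z -> 0 <= t -> 0 <= s -> rV_borel B ->
  P z (Z (t + s) @^-1` B) = (\int[P z]_w P (Z t w) (Z s @^-1` B))%E.
Proof.
move=> Ez t0 s0 hB; case: SM => _ _ _ _ sM.
have tau : stopping_time F (fun _ : Om => t) by split => // u u0; exact: filtration_const_event.
have Ftau : F_tau F (fun _ : Om => t) setT.
  by split => // u u0; rewrite setTI; exact: filtration_const_event.
by have := sM z Ez _ tau setT Ftau s B s0 hB; rewrite setTI.
Qed.

Lemma measurable_law_Z t (S : set Om) : 0 <= t -> measurable S ->
  measurable_fun [set: Om] (fun w => (P (Z t w) S : \bar R)).
Proof.
move=> t0 mS.
apply: (measurability _ (ErealGenOInfty.measurableE R)) => // _ [_ [x ->] <-].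
case: SM => _ _ _ /(_ S mS x) [B [hB hEB]] _.
rewrite setTI (_ : _ @^-1` _ = ~` (Z t @^-1` B)).
  exact/measurableC/measurable_Z_preimage.
apply/seteqP; split => w /=.
  rewrite in_itv /= andbT => xP hBw.
  have : (E `&` B) (Z t w) by split => //; exact: Z_in_E.
  by rewrite -hEB => -[_ /=]; rewrite leNgt xP.
move=> nB; rewrite in_itv /= andbT ltNge; apply/negP => hle; apply: nB.
have : (E `&` [set z | (P z S <= x%:E)%E]) (Z t w) by split => //; exact: Z_in_E.
by rewrite hEB => -[].
Qed.

Lemma measurable_dotp_Z t (a v : V) : 0 <= t ->
  measurable_fun setT (fun w => dotp a (Z t w - v)).
Proof.
move=> t0; apply: (measurability _ (RGenOInfty.measurableE R)) => // _ [_ [x ->] <-].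
rewrite setTI (_ : _ @^-1` _ = Z t @^-1` [set y | x < dotp a (y - v)]).
  by apply: measurable_Z_preimage => //; apply: rV_borel_gt; exact: continuous_dotp_sub.
by apply/seteqP; split => w /=; rewrite in_itv /= andbT.
Qed.

Lemma measurable_floor_dotp_Z t (a v : V) (k : int) : 0 <= t ->
  measurable [set w | Num.floor (dotp a (Z t w - v)) = k].
Proof.
move=> t0; apply: (@measurable_Z_preimage t [set x | Num.floor (dotp a (x - v)) = k]) => //.
by apply: rV_borel_floor_eq; exact: continuous_dotp_sub.
Qed.

Lemma measurable_Z_scaleset t n (q : V) r : 0 <= t -> n != 0 ->
  measurable [set w | scaleset n (eball q r) (Z t w)].
Proof.
move=> t0 n0; apply: (@measurable_Z_preimage t (scaleset n (eball q r))) => //.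
exact: rV_borel_scaleset_eball.
Qed.

Section exponential_moment.
Variable a : V.

Definition exp_moment z t := (\int[P z]_w (expR (dotp a (Z t w - z)))%:E)%E.

Lemma measurable_expR_dotp_Z t (v : V) : 0 <= t ->
  measurable_fun setT (fun w => (expR (dotp a (Z t w - v)))%:E).
Proof. by move=> t0; apply/measurable_EFinP/measurableT_comp => //; exact: measurable_dotp_Z. Qed.

Variable Phi : R.
Hypothesis exp_moment_le_Phi : forall y s, E y -> 0 <= s <= 1 -> (exp_moment y s <= Phi%:E)%E.
Hypothesis Phi_ge0 : 0 <= Phi.

Lemma floor_series_law_le y z s : E y -> 0 <= s <= 1 ->
  (\sum_(j <oo) (floor_weight R j)%:E * P y (floor_set (fun w => dotp a (Z s w - z)) j)
   <= (expR (dotp a (y - z) + 1) * Phi)%:E)%E.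
Proof.
move=> Ey /andP[s0 s1].
have mXs k : measurable [set w | Num.floor (dotp a (Z s w - z)) = k].
  exact: measurable_floor_dotp_Z.
apply: le_trans (@floor_series_le_integral_expRD1 _ _ _ (P y) _ mXs) _.
have shift w : (expR (dotp a (Z s w - z) + 1))%:E =
    ((expR (dotp a (y - z) + 1))%:E * (expR (dotp a (Z s w - y)))%:E)%E.
  rewrite -EFinM -expRD; congr (expR _)%:E.
  by rewrite !dotpB; ring.
under eq_integral => w _ do rewrite shift.
rewrite ge0_integralZl_EFin ?expR_ge0 //; last exact: measurable_expR_dotp_Z.
by rewrite EFinM lee_pmul2l ?lte_fin ?expR_gt0 // exp_moment_le_Phi // s0 s1.
Qed.

(* The Markov property is only available for events; discretizing a . Z on the
   integer levels of its floor costs the factor e. *)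
Lemma exp_moment_shift_le z t s : E z -> 0 <= t -> 0 <= s <= 1 ->
  (exp_moment z (t + s) <= (expR 1 * Phi)%:E * exp_moment z t)%E.
Proof.
move=> Ez t0 s01; have /andP[s0 _] := s01.
pose Xts w := dotp a (Z (t + s) w - z); pose Xs w := dotp a (Z s w - z).
have mXts k : measurable [set w | Num.floor (Xts w) = k].
  by apply: measurable_floor_dotp_Z; rewrite addr_ge0.
rewrite /exp_moment; apply: le_trans (@integral_expR_le_floor_series _ _ _ (P z) Xts mXts) _.
have Markov_level j : P z (floor_set Xts j) = (\int[P z]_w P (Z t w) (floor_set Xs j))%E.
  apply: (@Markov_const_time z t s [set x | Num.floor (dotp a (x - z)) = floor_level j]) => //.
  by apply: rV_borel_floor_eq; exact: continuous_dotp_sub.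
have mlevel j : measurable (floor_set Xs j) by exact: measurable_floor_dotp_Z.
rewrite (eq_eseriesr (g := fun j =>
    \int[P z]_w ((floor_weight R j)%:E * P (Z t w) (floor_set Xs j)))%E); last first.
  move=> j _; rewrite ge0_integralZl_EFin ?floor_weight_ge0 -?Markov_level //.
  exact: measurable_law_Z.
rewrite -integral_nneseries //; first last.
- by move=> j w _; rewrite mule_ge0 ?lee_fin ?floor_weight_ge0.
- by move=> j; apply: measurable_funeM; exact: measurable_law_Z.
rewrite -ge0_integralZl_EFin //; first last.
- by rewrite mulr_ge0 ?expR_ge0.
- exact: measurable_expR_dotp_Z.
apply: ge0_le_integral_nomeas => w _.
  by apply: nneseries_ge0 => j _ _; rewrite mule_ge0 ?lee_fin ?floor_weight_ge0.
rewrite -EFinM mulrAC -expRD addrC.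
exact/floor_series_law_le/s01/Z_in_E.
Qed.

Definition moment_growth := Num.max 1 (expR 1 * Phi).

Lemma moment_growth_ge1 : 1 <= moment_growth.
Proof. by rewrite le_max lexx. Qed.

Lemma moment_growth_gt0 : 0 < moment_growth.
Proof. exact: lt_le_trans ltr01 moment_growth_ge1. Qed.

Lemma expR1_Phi_le_growth : expR 1 * Phi <= moment_growth.
Proof. by rewrite le_max lexx orbT. Qed.

Lemma Phi_le_growth : Phi <= moment_growth.
Proof.
apply: le_trans expR1_Phi_le_growth; rewrite ler_peMl //.
by rewrite -expR0 ler_expR.
Qed.

Lemma exp_moment_le_growth_pow m z t : E z -> 0 <= t <= m.+1%:R ->
  (exp_moment z t <= (moment_growth ^+ m.+1)%:E)%E.
Proof.
elim: m z t => [|m IHm] z t Ez /andP[t0 tm].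
  by apply: le_trans (exp_moment_le_Phi Ez _) _; rewrite ?t0 // lee_fin expr1 Phi_le_growth.
have [t1|t1] := leP t 1.
  apply: le_trans (exp_moment_le_Phi Ez _) _; rewrite ?t0 // lee_fin.
  apply: le_trans Phi_le_growth _; rewrite exprS ler_peMr ?(ltW moment_growth_gt0) //.
  exact: exprn_ege1 moment_growth_ge1.
have t10 : 0 <= t - 1 by rewrite subr_ge0 ltW.
rewrite -(subrK 1 t); apply: le_trans (exp_moment_shift_le Ez t10 _) _; first by rewrite ler01 lexx.
apply: le_trans (lee_wpmul2l _ (IHm _ _ Ez _)) _.
- by rewrite lee_fin mulr_ge0 ?expR_ge0.
- by rewrite t10 /= lerBlDr natr1.
rewrite -EFinM lee_fin [leRHS]exprS ler_wpM2r ?expR1_Phi_le_growth //.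
exact/exprn_ge0/ltW/moment_growth_gt0.
Qed.

Lemma prob_le_expR_growth z t (S : set Om) c m : E z -> 0 <= t <= m.+1%:R -> measurable S ->
  (forall w, S w -> c <= dotp a (Z t w - z)) ->
  (P z S <= (expR (- c) * moment_growth ^+ m.+1)%:E)%E.
Proof.
move=> Ez tm mS hS.
have cPS : ((expR c)%:E * P z S = \int[P z]_w (expR c * \1_S w)%:E)%E.
  rewrite (@integralZl_indic _ _ _ (P z) setT measurableT (fun _ => S) (expR c)) //.
    by rewrite integral_indic ?setIT.
  by move=> h; have := expR_gt0 c; rewrite ltNge ltW.
have cPS_le : ((expR c)%:E * P z S <= exp_moment z t)%E.
  rewrite cPS; apply: ge0_le_integral_nomeas => w _.
    by rewrite lee_fin mulr_ge0 ?expR_ge0.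
  rewrite lee_fin indicE; case: (boolP (w \in S)) => [/set_mem/hS hc|_].
    by rewrite mulr1 ler_expR.
  by rewrite mulr0 expR_ge0.
have := le_trans cPS_le (exp_moment_le_growth_pow Ez tm).
have fS : P z S \is a fin_num.
  by rewrite ge0_fin_numE ?measure_ge0 // (le_lt_trans (probability_le1 _ mS)) ?ltry.
rewrite -(fineK fS) -EFinM !lee_fin => h.
by rewrite -ler_pdivlMl ?expR_gt0 // -expRN in h.
Qed.

Lemma occupation_integral_le (q q' : V) (kappa r : R) n z :
  E z -> (0 < n)%N -> 0 <= kappa -> 0 < r -> enorm (z - n%:R *: q) < r * n%:R ->
  (\int[lebesgue_measure]_(t in `[0%R, (kappa * n%:R)%R]%classic)
      P z [set w | scaleset n%:R (eball q' r) (Z t w)]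
    <= ((kappa * n%:R) * expR (- (n%:R * (dotp a (q' - q) - 2 * l1norm a * r))
           + (kappa * n%:R + 1) * ln moment_growth))%:E)%E.
Proof.
move=> Ez n0 kappa0 r0 hz.
set c := n%:R * _; set K := expR (- c + _).
have nz : (n%:R : R) != 0 by rewrite pnatr_eq0 -lt0n.
apply: le_trans (@ge0_le_integral_nomeas _ _ _ _ _ _ (cst K%:E) _ _) _.
- by move=> t _; exact: measure_ge0.
- move=> t; rewrite /= in_itv /= => /andP[t0 tk].
  have tm : 0 <= t <= (Num.trunc t).+1%:R by rewrite t0 ltW // truncnS_gt.
  apply: le_trans (prob_le_expR_growth (c := c) Ez tm _ _) _.
  + exact: measurable_Z_scaleset.
  + by move=> w /= [y hy <-]; exact: dotp_scaled_ball_ge.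
  rewrite lee_fin /K expRD ler_wpM2l ?expR_ge0 //.
  rewrite -[X in X ^+ _](lnK moment_growth_gt0) -expRM_natl ler_expR.
  rewrite ler_wpM2r ?ln_ge0 ?moment_growth_ge1 // -natr1 lerD2r.
  by apply: le_trans tk; rewrite truncn_le.
rewrite integral_cst /=; last exact: measurable_itv.
rewrite lebesgue_measure_itv /= lte_fin.
case: ifPn => _; last by rewrite mule0 lee_fin !mulr_ge0 ?expR_ge0.
by rewrite oppr0 adde0 -EFinM lee_fin mulrC.
Qed.

Lemma occupation_rate_limsup_le (q q' : V) A : dotp a (q' - q) = A + 4 ->
  (limn_esup (occupation_rate E P Z q q' (ln moment_growth + 1)^-1 (2 * l1norm a + 1)^-1)
   <= (- A)%:E)%E.
Proof.
move=> aqq'; set l := ln moment_growth; set r := (2 * l1norm a + 1)^-1.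
have l0 : 0 <= l by rewrite ln_ge0 // moment_growth_ge1.
have r0 : 0 < r by rewrite invr_gt0 ltr_wpDl ?mulr_ge0 ?l1norm_ge0.
have kappa0 : 0 <= (l + 1)^-1 by rewrite invr_ge0 addr_ge0.
apply: (@limn_esup_le _ _ _ (Num.trunc l).+1) => n ln_lt.
have n0 : (0 < n)%N by apply: leq_trans ln_lt.
have l_lt_n : l < n%:R by apply: lt_le_trans (truncnS_gt l) _; rewrite ler_nat.
apply: ge_ereal_sup => _ [z [Ez hz] <-].
have hI := occupation_integral_le q' Ez n0 kappa0 r0 hz.
apply: le_trans (lee_wpmul2l _ (lne_le_ln _ hI _)) _.
- by rewrite lee_fin invr_ge0.
- by apply: integral_ge0 => t _; exact: measure_ge0.
- by rewrite !mulr_gt0 ?expR_gt0 ?invr_gt0 ?ltr0n // ltr_wpDl.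
rewrite -EFinM lee_fin lnM ?posrE ?expR_gt0 ?mulr_gt0 ?invr_gt0 ?ltr0n ?ltr_wpDl //.
by rewrite expRK aqq'; exact: rate_le_opp (l1norm_ge0 a) l_lt_n.
Qed.

End exponential_moment.

Lemma occupation_rate_limsup_nondecreasing (q q' : V) kappa :
  {in `]0, +oo[ &, nondecreasing_fun
     (fun r => limn_esup (occupation_rate E P Z q q' kappa r))}.
Proof.
move=> r r'; rewrite !in_itv /= !andbT => r0 r'0 rr'.
apply: le_limn_esup => n; apply: ge_ereal_sup => _ [z [Ez hz] <-].
have n0 : (0 < n)%N.
  by rewrite lt0n; apply: contraTneq hz => ->; rewrite mulr0 ltNge sqrtr_ge0.
have nz : (n%:R : R) != 0 by rewrite pnatr_eq0 -lt0n.
apply: le_ereal_sup_tmp; eexists.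
  by exists z => //; split => //; apply: lt_le_trans hz _; rewrite ler_wpM2r.
apply: lee_wpmul2l; first by rewrite lee_fin invr_ge0.
rewrite lee_lne ?in_itv /= ?leey ?andbT; first last.
- by apply: integral_ge0 => t _; exact: measure_ge0.
- by apply: integral_ge0 => t _; exact: measure_ge0.
apply: ge0_le_integral_nomeas => t; rewrite /= in_itv /= => /andP[t0 _].
  exact: measure_ge0.
apply: le_measure; rewrite ?inE.
- exact: measurable_Z_scaleset.
- exact: measurable_Z_scaleset.
by move=> w /= [v rv <-]; exists v => //; exact: lt_le_trans rv rr'.
Qed.

End strong_Markov_process.

Lemma phi_hat_bound (R : realType) d (dO : measure_display) (Om : measurableType dO)
    (E : set 'rV[R]_d) (P : 'rV[R]_d -> probability Om R) (Z : R -> Om -> 'rV[R]_d) a :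
  E !=set0 -> (phi_hat E P Z a < +oo)%E ->
  exists2 Phi, 0 <= Phi &
    forall y s, E y -> 0 <= s <= 1 -> (exp_moment P Z a y s <= Phi%:E)%E.
Proof.
move=> [z0 Ez0] phi_fin.
have phi_ge0 : (0 <= phi_hat E P Z a)%E.
  apply: le_trans (ereal_sup_ubound _); last by exists z0, 0; rewrite lexx ler01.
  by apply: integral_ge0 => w _; rewrite lee_fin expR_ge0.
exists (fine (phi_hat E P Z a)); first exact: fine_ge0.
move=> y s Ey s01; rewrite fineK ?ge0_fin_numE //.
by apply: ereal_sup_ubound; exists y, s.
Qed.

Theorem lemma3p1 (R : realType) (d : nat) (dO : measure_display)
  (Om : measurableType dO) (E : set 'rV[R]_d) (P : 'rV[R]_d -> probability Om R)
  (Z : R -> Om -> 'rV[R]_d) (F : R -> set (set Om)) :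
  unbounded E ->
  strong_Markov_process E P Z F ->
  H2 E P Z ->
  forall (q q' : 'rV[R]_d) (A : R), q != q' -> 0 < A ->
  exists kappa : R, 0 < kappa /\
    exists l : \bar R,
      limn_esup (occupation_rate E P Z q q' kappa delta) @[delta --> 0^'+] --> l
      /\ (l <= (- A)%:E)%E.
Proof.
move=> /unbounded_nonempty E0 SM phi_fin q q' A qq' A0.
have [a aqq'] : exists a, dotp a (q' - q) = A + 4.
  by apply: dotp_eq_exists; rewrite subr_eq0 eq_sym.
have [Phi Phi0 PhiP] := phi_hat_bound E0 (phi_fin a).
set kappa := (ln (moment_growth Phi) + 1)^-1.
have kappa0 : 0 < kappa by rewrite invr_gt0 ltr_wpDl ?ln_ge0 ?moment_growth_ge1.
exists kappa; split => //.
set g := fun r => limn_esup (occupation_rate E P Z q q' kappa r).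
have g_nd := occupation_rate_limsup_nondecreasing SM q q' kappa.
exists (ereal_inf (g @` [set` `]0, +oo[])); split; first exact: nondecreasing_at_right_cvge.
apply: le_trans (ereal_inf_lbound _) (occupation_rate_limsup_le SM PhiP Phi0 aqq').
exists (2 * l1norm a + 1)^-1 => //=.
by rewrite in_itv /= andbT invr_gt0 ltr_wpDl ?mulr_ge0 ?l1norm_ge0.
Qed.
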